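(* Let $a$ be a regular scale factor with $\dot a(0^+)<\infty$, extended evenly to negative arguments, and fix $\tau>0$. Then the function $t_0\mapsto f(\tau,t_0)$ is continuously differentiable on $\{t_0: -\tau<t_0<\tau,\ t_0\neq0\}$, and \[ \partial_{t_0}f(\tau,t_0)=-\frac{a(t_0)\,\dot a(|t_0|)}{\sqrt{a^2(\tau)-a^2(t_0)}}\int_{|t_0|}^{\tau}\frac{\ddot a(t)}{\dot a(t)^2}\frac{dt}{\sqrt{a^2(\tau)-a^2(t)}}. \]
   Context: A function $a:[0,\infty)\to[0,\infty)$ is a regular scale factor if: (a) $a(0)=0$; (b) $a$ is increasing and continuous on $[0,\infty)$, twice continuously differentiable on $(0,\infty)$, with an inverse function on $[0,\infty)$; (c) $\frac{a(t)\ddot a(t)}{\dot a(t)^2}\le1$ for all $t>0$ (presupposing $\dot a(t)\ne0$). $\dot a(0^+)=\lim_{t\to0^+}\dot a(t)$. Extend $a$ by $a(-t)=a(t)$. For $0\le t_0<\tau$, \[ f(\tau,t_0)=\int_{t_0}^{\tau}\frac{\ddot a(t)}{\dot a(t)^2}\left(\frac{\sqrt{a^2(\tau)-a^2(t_0)}}{\sqrt{a^2(\tau)-a^2(t)}}-1\right)dt, \] and for $-\tau<t_0<0$, $f(\tau,t_0)=2f(\tau,0)-f(\tau,-t_0)$. *)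

From HB Require Import structures.
From mathcomp Require Import all_boot all_order all_algebra.
From mathcomp Require Import all_classical all_reals all_analysis.
Set Implicit Arguments. Unset Strict Implicit. Unset Printing Implicit Defensive.
Import Order.TTheory GRing.Theory Num.Theory.
Import numFieldNormedType.Exports.
Local Open Scope classical_set_scope.
Local Open Scope ring_scope.

(* [a : R -> R] is the scale factor; only its
   restriction to [0, +oo) matters for the regularity conditions.  The even
   extension a(-t) = a(t) is imposed as a separate hypothesis in the theorem. *)

Record regular_scale_factor {R : realType} (a : R -> R) : Prop := {
  rsf_a0 : a 0 = 0;
  rsf_ge0 : forall t, 0 <= t -> 0 <= a t;
  rsf_incr : forall s t, 0 <= s -> s < t -> a s < a t;
  (* the inverse function is defined on all of [0,oo): a is onto [0,oo) *)
  rsf_onto : forall y, 0 <= y -> exists t, 0 <= t /\ a t = y;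
  rsf_cont : {within `[0, +oo[, continuous a};
  rsf_d1 : forall t, 0 < t -> derivable a t 1;
  rsf_d2 : forall t, 0 < t -> derivable (derive1 a) t 1;
  rsf_d2cont : forall t, 0 < t -> {for t, continuous (derive1 (derive1 a))};
  (* condition (c), presupposing adot t <> 0 *)
  rsf_adot_neq0 : forall t, 0 < t -> derive1 a t != 0;
  rsf_c : forall t, 0 < t -> a t * derive1 (derive1 a) t / (derive1 a t) ^+ 2 <= 1 }.

Definition adot0_finite {R : realType} (a : R -> R) : Prop :=
  exists L : R, derive1 a x @[x --> 0^'+] --> L.

Definition f_pos {R : realType} (a : R -> R) (tau t0 : R) : R :=
  Rintegral (@lebesgue_measure R) `]t0, tau[
    (fun t => derive1 (derive1 a) t / (derive1 a t) ^+ 2 *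
       (Num.sqrt (a tau ^+ 2 - a t0 ^+ 2) / Num.sqrt (a tau ^+ 2 - a t ^+ 2) - 1)).

Definition f_sf {R : realType} (a : R -> R) (tau t0 : R) : R :=
  if 0 <= t0 then f_pos a tau t0 else 2 * f_pos a tau 0 - f_pos a tau (- t0).

(* For 0 < t0 < tau write f(tau, t0) = P(t0) I(t0) - G(t0), where
   P(t) = sqrt(a(tau)^2 - a(t)^2), g = a''/a'^2, I(t0) = int_t0^tau g/P and
   G(t0) = int_t0^tau g.  The tails I and G have derivatives -g/P and -g, so in
   the product rule the terms -P g/P and +g cancel and only
   P'(t0) I(t0) = -(a a'/P)(t0) I(t0) survives.  The one analytic point is the
   integrability of 1/P at tau: on [c, tau[ it is dominated by a multiple of
   a a'/P = -P', whose integral over [c, s] is at most P(c).  Negative t0 follow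
   from the reflection formula defining f and the evenness of a. *)

From HB Require Import structures.
From mathcomp Require Import all_boot all_order all_algebra.
From mathcomp Require Import all_classical all_reals all_analysis.
From mathcomp Require Import measurable_realfun ring lra.
Import Order.TTheory GRing.Theory Num.Theory.
Import numFieldNormedType.Exports.
Local Open Scope classical_set_scope.
Local Open Scope ring_scope.
Set Implicit Arguments. Unset Strict Implicit.

Lemma derivable1_continuous {R : realType} (f : R -> R) (x : R) :
  derivable f x 1 -> {for x, continuous f}.
Proof. by move=> df; exact/differentiable_continuous/derivable1_diffP. Qed.

Lemma even_fun_norm {R : realDomainType} {T : Type} (f : R -> T) :
  (forall t, f (- t) = f t) -> forall x, f x = f `|x|.
Proof. by move=> f_even x; case: ger0P => // _; rewrite f_even. Qed.

Lemma near_norm_itvoo {R : realType} (tau t0 : R) : 0 < `|t0| < tau ->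
  \forall x \near t0, 0 < `|x| < tau.
Proof.
move=> t0I; have /near_in_itvoo near_norm : `|t0| \in `]0, tau[ by rewrite in_itv.
have : \forall x \near t0, `|x| \in `]0, tau[ := @norm_continuous _ R t0 _ near_norm.
by apply: filterS => x; rewrite in_itv.
Qed.

Section IntegralsOnIntervals.
Context {R : realType}.
Local Notation mu := (@lebesgue_measure R).

Lemma integral_itvcc_is_derive (F f : R -> R) (c s : R) : c < s ->
  (forall x, c <= x <= s -> is_derive x 1 F (f x)) ->
  {within `[c, s], continuous f} ->
  (\int[mu]_(x in `[c, s]) (f x)%:E = (F s - F c)%:E)%E.
Proof.
move=> cs dF cf.
have Fcont x : c <= x <= s -> {for x, continuous F}.
  by move=> /dF [dFx _]; exact: derivable1_continuous.
rewrite EFinB (@continuous_FTC2 _ f F _ _ cs cf) //.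
- split.
  + by move=> x; rewrite in_itv /= => /andP[cx xs]; case: (dF x); rewrite ?ltW.
  + by apply: cvg_at_right_filter; apply: Fcont; rewrite lexx ltW.
  + by apply: cvg_at_left_filter; apply: Fcont; rewrite lexx ltW.
- move=> x; rewrite in_itv /= => /andP[cx xs].
  by rewrite derive1E; have [_ ->] := dF x ltac:(by rewrite !ltW).
Qed.

Lemma ge0_integrable_itvco_bounded (f : R -> R) (c tau M : R) : c < tau ->
  measurable_fun `[c, tau[ f -> {in `[c, tau[, forall x, 0 <= f x} ->
  (forall s, c < s < tau -> (\int[mu]_(x in `[c, s]) (f x)%:E <= M%:E)%E) ->
  mu.-integrable `[c, tau[ (EFin \o f).
Proof.
move=> ctau mf f0 bounded.
pose F n := [set` `[c, tau - n.+1%:R^-1]].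
have FE : `[c, tau[%classic = \bigcup_n F n := itv_bnd_open_bigcup true c tau.
have ndF : nondecreasing_seq F.
  apply/nondecreasing_seqP => n; rewrite subsetEset; apply: subset_itvl.
  by rewrite bnd_simp lerD2l lerN2 lef_pV2 ?posrE ?ltr0n // ler_nat.
have FS n : F n `<=` `[c, tau[ by rewrite FE; exact: bigcup_sup.
have mfF n : measurable_fun (F n) (EFin \o f).
  by apply/measurable_EFinP; exact: measurable_funS (FS n) mf.
have f0F n x : F n x -> (0 <= (EFin \o f) x)%E.
  by move=> /FS xI; rewrite lee_fin f0 // inE.
have cvgF := @ge0_nondecreasing_set_cvg_integral _ (measurableTypeR R) _ F _ mu
  ndF (fun n => measurable_itv _) mfF f0F.
rewrite -FE in cvgF.
apply/integrableP; split; first exact/measurable_EFinP.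
under eq_integral => x /[!inE] xI do rewrite /= ger0_norm ?f0 //.
rewrite -(cvg_lim _ cvgF) //; apply: le_lt_trans (ltry M); apply: lime_le.
  by apply/cvg_ex; eexists; exact: cvgF.
have tc : 0 < tau - c by rewrite subr_gt0.
near=> n; apply: bounded; apply/andP; split; last by rewrite ltrBlDr ltrDl.
have : (tau - c)^-1 <= n%:R by near: n; exact: nbhs_infty_ger.
move=> hn; suff : n.+1%:R^-1 < tau - c by rewrite ltrBrDr -ltrBrDl.
rewrite -[tau - c]invrK ltf_pV2 ?posrE ?invr_gt0 ?ltr0n //.
by apply: le_lt_trans hn _; rewrite ltr_nat.
Unshelve. all: by end_near.
Qed.

Lemma is_derive_integral_itvoo_tail (k : R -> R) (c t0 tau : R) :
  c < t0 < tau -> mu.-integrable `]c, tau[ (EFin \o k) -> {for t0, continuous k} ->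
  is_derive t0 1 (fun x => \int[mu]_(t in `]x, tau[) k t) (- k t0).
Proof.
move=> /andP[ct0 t0tau] ki kt0.
set c' := (c + t0) / 2; set u := (t0 + tau) / 2.
have cc' : c < c' by rewrite /c'; lra.
have c't0 : c' < t0 by rewrite /c'; lra.
have t0u : t0 < u by rewrite /u; lra.
have kic' : mu.-integrable `]c', tau[ (EFin \o k).
  by apply: integrableS ki => //; apply: subset_itvr; rewrite bnd_simp ltW.
have kiu : mu.-integrable `[c', u] (EFin \o k).
  apply: integrableS ki => //; apply: subset_itvSoo; rewrite bnd_simp //.
  by rewrite /u; lra.
have [dF dFE] := continuous_FTC1_closed t0u kiu c't0 kt0.
set F := (fun x => \int[mu]_(t in `[c', x]) k t) in dF dFE.
have iF : is_derive t0 1 F (k t0) by rewrite -dFE derive1E; exact: derivableP.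
have := is_deriveB (is_derive_cst (\int[mu]_(t in `]c', tau[) k t) t0 1) iF.
rewrite sub0r; apply: near_eq_is_derive.
have : t0 \in `]c', tau[ by rewrite in_itv /= c't0 t0tau.
move/near_in_itvoo; apply: filterS => x; rewrite in_itv /= => /andP[c'x xtau].
rewrite /= /F -(@Rintegral_itvB _ _ (BRight c') (BLeft tau) x) ?bnd_simp ?ltW //.
congr (_ - _); rewrite Rintegral_itv_obnd_cbnd //.
by apply: integrableS kic' => //; apply: subset_itvl; rewrite bnd_simp.
Qed.

End IntegralsOnIntervals.

Section RegularScaleFactor.
Context {R : realType}.
Local Notation mu := (@lebesgue_measure R).
Variable a : R -> R.
Hypothesis Ha : regular_scale_factor a.

Lemma rsf_gt0 t : 0 < t -> 0 < a t.
Proof. by move=> t0; rewrite -(rsf_a0 Ha); exact: rsf_incr. Qed.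

Lemma rsf_derive_gt0 t : 0 < t -> 0 < derive1 a t.
Proof.
move=> t0; rewrite lt_neqAle eq_sym rsf_adot_neq0 //=.
apply: (@incr_derive1_ge0_itvy _ _ true 0).
- by move=> x; rewrite inE /= in_itv /= andbT => x0; exact: rsf_d1.
- by move=> x y + _; rewrite in_itv /= andbT; exact: rsf_incr.
- by rewrite in_itv /= t0.
Qed.

Lemma rsf_continuous t : 0 < t -> {for t, continuous a}.
Proof. by move=> t0; apply: derivable1_continuous; exact: rsf_d1. Qed.

Lemma rsf_derive_continuous t : 0 < t -> {for t, continuous (derive1 a)}.
Proof. by move=> t0; apply: derivable1_continuous; exact: rsf_d2. Qed.

Definition accel_ratio t := derive1 (derive1 a) t / derive1 a t ^+ 2.

Lemma accel_ratio_continuous t : 0 < t -> {for t, continuous accel_ratio}.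
Proof.
move=> t0; apply: continuousM; first exact: rsf_d2cont.
apply: continuousV; first by rewrite expf_neq0 // rsf_adot_neq0.
by apply: continuousM; exact: rsf_derive_continuous.
Qed.

Variable tau : R.

Definition sqrt_gap t := Num.sqrt (a tau ^+ 2 - a t ^+ 2).

Lemma sqrt_gap_gt0 t : 0 <= t < tau -> 0 < sqrt_gap t.
Proof.
move=> /andP[t0 ttau].
by rewrite sqrtr_gt0 subr_gt0 ltrXn2r ?rsf_ge0 ?rsf_incr // (le_trans t0 (ltW ttau)).
Qed.

Lemma sqrt_gap_continuous t : 0 < t -> {for t, continuous sqrt_gap}.
Proof.
move=> t0; apply: continuous_comp; last exact: sqrt_continuous.
apply: continuousB; first exact: cst_continuous.
by apply: continuousM; exact: rsf_continuous.
Qed.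

Lemma is_derive_sqrt_gap t : 0 < t < tau ->
  is_derive t 1 sqrt_gap (- (a t * derive1 a t / sqrt_gap t)).
Proof.
move=> /andP[t0 ttau].
have gap0 : 0 < sqrt_gap t by rewrite sqrt_gap_gt0 // ltW.
have da : is_derive t 1 a (derive1 a t).
  by rewrite derive1E; apply: derivableP; exact: rsf_d1.
have dgap : is_derive t 1 (fun x => a tau ^+ 2 - a x ^+ 2) (- (2 * a t * derive1 a t)).
  have -> : (fun x => a tau ^+ 2 - a x ^+ 2) = cst (a tau ^+ 2) - a ^+ 2 by [].
  apply: is_derive_eq (is_deriveB (is_derive_cst _ t 1) (is_deriveX 2 da)) _.
  by rewrite sub0r expr1.
have sqrt_dgap := is_derive1_comp (is_derive1_sqrt _) dgap.
apply: is_derive_eq (sqrt_dgap _) _; first by rewrite -sqrtr_gt0.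
by rewrite -/(sqrt_gap t); field; rewrite gt_eqF.
Qed.

Lemma inv_sqrt_gap_continuous t : 0 < t < tau ->
  {for t, continuous (fun x => (sqrt_gap x)^-1)}.
Proof.
move=> /andP[t0 ttau]; apply: continuousV; last exact: sqrt_gap_continuous.
by rewrite gt_eqF // sqrt_gap_gt0 // ltW.
Qed.

Lemma mul_derive_continuous t : 0 < t -> {for t, continuous (fun x => a x * derive1 a x)}.
Proof.
move=> t0; apply: (@continuousM _ _ a (derive1 a)).
  exact: rsf_continuous.
exact: rsf_derive_continuous.
Qed.

Lemma mul_derive_div_sqrt_gap_continuous t : 0 < t < tau ->
  {for t, continuous (fun x => a x * derive1 a x / sqrt_gap x)}.
Proof.
move=> tI; have /andP[t0 _] := tI.
apply: (@continuousM _ _ (fun x => a x * derive1 a x) (fun x => (sqrt_gap x)^-1)).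
  exact: mul_derive_continuous.
exact: inv_sqrt_gap_continuous.
Qed.

Lemma inv_sqrt_gap_le_mul c : 0 < c < tau -> exists2 K, 0 <= K &
  forall x, c <= x < tau -> (sqrt_gap x)^-1 <= K * (a x * derive1 a x / sqrt_gap x).
Proof.
move=> /andP[c0 ctau].
have pos x : c <= x -> 0 < x by exact: lt_le_trans.
pose k x := (a x * derive1 a x)^-1.
have [x1 /[!in_itv] /andP[cx1 _] kmax] : exists2 x1, x1 \in `[c, tau] &
    forall x, x \in `[c, tau] -> k x <= k x1.
  apply: EVT_max (ltW ctau) _; apply: continuous_in_subspaceT => x.
  rewrite inE /= in_itv /= => /andP[/pos x0 _].
  apply: (@continuousV _ _ (fun x => a x * derive1 a x)); last exact: mul_derive_continuous.
  by rewrite mulf_neq0 // gt_eqF ?rsf_gt0 ?rsf_derive_gt0.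
exists (k x1); first by rewrite invr_ge0 mulr_ge0 ?ltW ?rsf_gt0 ?rsf_derive_gt0 ?pos.
move=> x /andP[cx xtau]; have x0 := pos x cx.
have ax := rsf_gt0 x0; have dax := rsf_derive_gt0 x0.
have gap0 : 0 < sqrt_gap x by rewrite sqrt_gap_gt0 // ltW.
rewrite [X in X <= _](_ : _ = k x * (a x * derive1 a x / sqrt_gap x)); last first.
  by rewrite /k; field; rewrite !gt_eqF.
apply: ler_wpM2r; first by rewrite divr_ge0 ?mulr_ge0 ?ltW.
by apply: kmax; rewrite in_itv /= cx ltW.
Qed.

Lemma integral_inv_sqrt_gap_bounded c : 0 < c < tau -> exists M, forall s, c < s < tau ->
  (\int[mu]_(x in `[c, s]) ((sqrt_gap x)^-1)%:E <= M%:E)%E.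
Proof.
move=> /[dup] /inv_sqrt_gap_le_mul [K K0 le_K] /andP[c0 ctau].
exists (K * sqrt_gap c) => s /andP[cs stau].
have in_domain x : c <= x <= s -> 0 < x < tau.
  by move=> /andP[cx /le_lt_trans xtau]; rewrite (lt_le_trans c0 cx) xtau.
pose v x := K * (a x * derive1 a x / sqrt_gap x).
have v_cont : {within `[c, s], continuous v}.
  apply: continuous_in_subspaceT => x /[!inE] /in_domain xI.
  apply: (@continuousM _ _ (cst K) (fun x => a x * derive1 a x / sqrt_gap x)).
    exact: cst_continuous.
  exact: mul_derive_div_sqrt_gap_continuous.
have dv x : c <= x <= s -> is_derive x 1 (- (K *: sqrt_gap)) (v x).
  move=> /in_domain xI.
  apply: is_derive_eq (is_deriveN (is_deriveZ K (is_derive_sqrt_gap xI))) _.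
  by rewrite scalerN opprK.
apply: le_trans (_ : (\int[mu]_(x in `[c, s]) (v x)%:E <= _)%E).
  apply: ge0_le_integral => //.
  - by move=> x _; rewrite lee_fin invr_ge0 sqrtr_ge0.
  - apply/measurable_int/(continuous_compact_integrable (@segment_compact _ c s)).
    apply: continuous_in_subspaceT => x /[!inE] /in_domain.
    exact: inv_sqrt_gap_continuous.
  - exact/measurable_int/(continuous_compact_integrable (@segment_compact _ c s) v_cont).
  move=> x; rewrite /= in_itv /= lee_fin => /andP[cx xs].
  by apply: le_K; rewrite cx (le_lt_trans xs).
rewrite (integral_itvcc_is_derive cs dv v_cont) lee_fin /= opprK addrC lerBlDr lerDl.
by rewrite mulr_ge0 ?sqrtr_ge0.
Qed.

Lemma integrable_inv_sqrt_gap c : 0 < c < tau ->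
  mu.-integrable `]c, tau[ (EFin \o fun x => (sqrt_gap x)^-1).
Proof.
move=> /[dup] /andP[c0 ctau] /integral_inv_sqrt_gap_bounded [M bounded].
apply: integrableS (ge0_integrable_itvco_bounded ctau _ _ bounded) => //.
- by apply: subset_itvr; rewrite bnd_simp.
- apply: (measurable_funS _ (_ : `[c, tau[ `<=` `]0, tau[)) => //.
    by apply: subset_itvr; rewrite bnd_simp.
  apply: open_continuous_measurable_fun; first exact: interval_open.
  by move=> x /[!inE]; exact: inv_sqrt_gap_continuous.
- by move=> x _; rewrite invr_ge0 sqrtr_ge0.
Qed.

Lemma integrable_accel_ratio c : 0 < c < tau ->
  mu.-integrable `]c, tau[ (EFin \o accel_ratio).
Proof.
move=> /andP[c0 ctau].
apply: integrableS (continuous_compact_integrable (@segment_compact _ c tau) _) => //.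
  exact: subset_itv_oo_cc.
apply: continuous_in_subspaceT => x; rewrite inE /= in_itv /= => /andP[cx _].
exact/accel_ratio_continuous/(lt_le_trans c0).
Qed.

Lemma integrable_accel_ratio_div_sqrt_gap c : 0 < c < tau ->
  mu.-integrable `]c, tau[ (EFin \o fun x => accel_ratio x / sqrt_gap x).
Proof.
move=> /[dup] cI /andP[c0 ctau].
have [x1 _ max_x1] : exists2 x1, x1 \in `[c, tau] &
    forall x, x \in `[c, tau] -> `|accel_ratio x| <= `|accel_ratio x1|.
  apply: EVT_max (ltW ctau) _; apply: continuous_in_subspaceT => x.
  rewrite inE /= in_itv /= => /andP[cx _].
  apply: (@continuous_comp _ _ _ accel_ratio Num.norm); last exact: norm_continuous.
  exact/accel_ratio_continuous/(lt_le_trans c0).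
apply: le_integrable (integrableZl _ `|accel_ratio x1| (integrable_inv_sqrt_gap cI)) => //.
  apply/measurable_EFinP; apply: open_continuous_measurable_fun; first exact: interval_open.
  move=> x; rewrite inE /= in_itv /= => /andP[cx xtau].
  have x0 := lt_trans c0 cx.
  apply: (@continuousM _ _ accel_ratio (fun x => (sqrt_gap x)^-1)).
    exact: accel_ratio_continuous.
  by apply: inv_sqrt_gap_continuous; rewrite x0.
move=> x; rewrite /= in_itv /= lee_fin => /andP[cx xtau].
have gap0 : 0 < sqrt_gap x by rewrite sqrt_gap_gt0 // ltW ?(lt_trans c0 cx).
rewrite [X in _ <= X]ger0_norm ?divr_ge0 ?(ltW gap0) // normf_div (gtr0_norm gap0).
by apply: ler_wpM2r; [rewrite invr_ge0 ltW|apply: max_x1; rewrite in_itv /= !ltW].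
Qed.

Definition weighted_tail x := \int[mu]_(t in `]x, tau[) (accel_ratio t / sqrt_gap t).

Definition accel_tail x := \int[mu]_(t in `]x, tau[) accel_ratio t.

Lemma f_pos_split x : 0 < x < tau ->
  f_pos a tau x = sqrt_gap x * weighted_tail x - accel_tail x.
Proof.
move=> xI; rewrite /f_pos.
transitivity (\int[mu]_(t in `]x, tau[)
    (sqrt_gap x * (accel_ratio t / sqrt_gap t) - accel_ratio t)).
  by apply: eq_Rintegral => t _; rewrite /accel_ratio /sqrt_gap; ring.
have wI := integrable_accel_ratio_div_sqrt_gap xI.
rewrite RintegralB ?RintegralZl //; last exact: integrable_accel_ratio.
exact: integrableZl wI.
Qed.

Lemma is_derive_weighted_tail t0 : 0 < t0 < tau ->
  is_derive t0 1 weighted_tail (- (accel_ratio t0 / sqrt_gap t0)).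
Proof.
move=> /andP[t00 t0tau]; have cI : 0 < t0 / 2 < tau by apply/andP; split; lra.
apply: (is_derive_integral_itvoo_tail _ (integrable_accel_ratio_div_sqrt_gap cI)).
  by apply/andP; split; lra.
apply: (@continuousM _ _ accel_ratio (fun x => (sqrt_gap x)^-1)).
  exact: accel_ratio_continuous.
by apply: inv_sqrt_gap_continuous; rewrite t00.
Qed.

Lemma is_derive_accel_tail t0 : 0 < t0 < tau ->
  is_derive t0 1 accel_tail (- accel_ratio t0).
Proof.
move=> /andP[t00 t0tau]; have cI : 0 < t0 / 2 < tau by apply/andP; split; lra.
apply: (is_derive_integral_itvoo_tail _ (integrable_accel_ratio cI)).
  by apply/andP; split; lra.
exact: accel_ratio_continuous.
Qed.

Lemma is_derive_f_pos t0 : 0 < t0 < tau ->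
  is_derive t0 1 (f_pos a tau) (- (a t0 * derive1 a t0 / sqrt_gap t0) * weighted_tail t0).
Proof.
move=> /[dup] t0I /andP[t00 t0tau].
have gap0 : 0 < sqrt_gap t0 by rewrite sqrt_gap_gt0 // ltW.
have := is_deriveB (is_deriveM (is_derive_sqrt_gap t0I) (is_derive_weighted_tail t0I))
  (is_derive_accel_tail t0I).
move=> /is_derive_eq D; apply: near_eq_is_derive (D _ _); last first.
  by rewrite /GRing.scale /=; field; rewrite gt_eqF.
have : t0 \in `]0, tau[ by rewrite in_itv /= t00.
move/near_in_itvoo; apply: filterS => x /[!in_itv] /= xI.
by rewrite f_pos_split.
Qed.

Hypothesis a_even : forall t, a (- t) = a t.

Definition f_sf_slope t0 :=
  - (a t0 * derive1 a `|t0| / sqrt_gap t0) * weighted_tail `|t0|.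

Lemma is_derive_f_sf (t0 : R) : 0 < `|t0| < tau -> is_derive t0 1 (f_sf a tau) (f_sf_slope t0).
Proof.
move=> /andP[t0_gt0 t0tau]; have [t0pos|t0neg] := ltP 0 t0.
  rewrite gtr0_norm // in t0tau.
  have t0I : 0 < t0 < tau by rewrite t0pos.
  have D := is_derive_f_pos t0I.
  apply: near_eq_is_derive (is_derive_eq D _); last by rewrite /f_sf_slope gtr0_norm.
  by near=> x; rewrite /f_sf ifT //; apply: ltW; near: x; exact: lt_nbhsr.
have t0n : t0 < 0 by rewrite lt_neqAle t0neg andbT -normr_gt0.
rewrite ltr0_norm // in t0tau t0_gt0.
have Nt0I : 0 < - t0 < tau by rewrite t0_gt0.
have D := is_derive1_comp (is_derive_f_pos Nt0I) (is_deriveNid t0 1).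
have := is_deriveB (is_derive_cst (2 * f_pos a tau 0) t0 1) D.
move=> /is_derive_eq D'; apply: near_eq_is_derive (D' _ _); last first.
  by rewrite /f_sf_slope ltr0_norm // a_even /sqrt_gap a_even; ring.
near=> x; rewrite /f_sf ifF //=; apply/negbTE; rewrite -ltNge.
by near: x; exact: lt_nbhsl.
Unshelve. all: by end_near.
Qed.

Lemma f_sf_slope_continuous (t0 : R) : 0 < `|t0| < tau -> {for t0, continuous f_sf_slope}.
Proof.
move=> t0I.
have -> : f_sf_slope =
    (fun y => - (a y * derive1 a y / sqrt_gap y) * weighted_tail y) \o Num.norm.
  by apply/funext => x; rewrite /f_sf_slope /sqrt_gap /= -!(even_fun_norm a_even).
apply: continuous_comp; first exact: norm_continuous.
apply: (@continuousM _ _ (fun y => - (a y * derive1 a y / sqrt_gap y)) weighted_tail).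
  exact/continuousN/mul_derive_div_sqrt_gap_continuous.
by have [d _] := is_derive_weighted_tail t0I; exact: derivable1_continuous d.
Qed.

Lemma derive1_f_sf (t0 : R) : 0 < `|t0| < tau -> derive1 (f_sf a tau) t0 = f_sf_slope t0.
Proof. by move=> /is_derive_f_sf D; rewrite derive1E; exact: derive_val. Qed.

Lemma derive1_f_sf_continuous (t0 : R) : 0 < `|t0| < tau ->
  {for t0, continuous (derive1 (f_sf a tau))}.
Proof.
move=> t0I; rewrite /prop_for /continuous_at derive1_f_sf //.
apply: cvg_trans (f_sf_slope_continuous t0I); apply: near_eq_cvg.
by apply: filterS (near_norm_itvoo t0I) => x /derive1_f_sf ->.
Qed.

End RegularScaleFactor.

Theorem lemma5p5 (R : realType) (a : R -> R) (tau : R) :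
  regular_scale_factor a ->
  adot0_finite a ->
  (forall t, a (- t) = a t) ->
  0 < tau ->
  let D := [set t0 : R | - tau < t0 < tau /\ t0 != 0] in
  (forall t0, D t0 -> derivable (f_sf a tau) t0 1) /\
  (forall t0, D t0 -> {for t0, continuous (derive1 (f_sf a tau))}) /\
  (forall t0, D t0 ->
     derive1 (f_sf a tau) t0 =
       - (a t0 * derive1 a `|t0| / Num.sqrt (a tau ^+ 2 - a t0 ^+ 2)) *
         Rintegral (@lebesgue_measure R) `]`|t0|, tau[
           (fun t => derive1 (derive1 a) t / (derive1 a t) ^+ 2 / Num.sqrt (a tau ^+ 2 - a t ^+ 2))).
Proof.
(* [adot0_finite a] only matters at t0 = 0, which is excluded. *)
move=> Ha _ a_even _ D.
have DI t0 : D t0 -> 0 < `|t0| < tau.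
  by move=> [t0I t0_neq0]; rewrite normr_gt0 t0_neq0 ltr_norml.
split; [|split] => t0 /DI t0I.
- by have [] := is_derive_f_sf Ha a_even t0I.
- exact: derive1_f_sf_continuous.
- by rewrite (derive1_f_sf Ha a_even t0I).
Qed.
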